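(* Let $\gamma_a,\gamma_s>0$, $\sigma_B>0$, $q>0$, $\lambda>0$, $\varepsilon_a\in(0,2)$, and let $\beta_s$ be the piecewise linear coalbedo described in the context. Then the system \[ \gamma_a T_a'=-\lambda(T_a-T_s)+\varepsilon_a\sigma_B|T_s|^3T_s-2\varepsilon_a\sigma_B|T_a|^3T_a,\qquad \gamma_s T_s'=-\lambda(T_s-T_a)-\sigma_B|T_s|^3T_s+\varepsilon_a\sigma_B|T_a|^3T_a+q\beta_s(T_s) \] has at most finitely many equilibrium points.
   Context: The coalbedo is $\beta_s(T)=\beta_{s,-}$ for $T\le T_{s,-}$, $\beta_s(T)=\beta_{s,-}+(\beta_{s,+}-\beta_{s,-})\frac{T-T_{s,-}}{T_{s,+}-T_{s,-}}$ for $T\in[T_{s,-},T_{s,+}]$, and $\beta_s(T)=\beta_{s,+}$ for $T\ge T_{s,+}$, where $T_{s,+}>T_{s,-}>0$ and $\beta_{s,+}>\beta_{s,-}>0$. An equilibrium point is a point $(T_a,T_s)\in[0,\infty)^2$ at which both right-hand sides vanish. *)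

From Stdlib Require Import Reals List.
Open Scope R_scope.

Definition coalbedo (Tm Tp bm bp T : R) : R :=
  if Rle_dec T Tm then bm
  else if Rle_dec Tp T then bp
  else bm + (bp - bm) * (T - Tm) / (Tp - Tm).

Definition rhs_a (sigmaB lam eps_a Ta Ts : R) : R :=
  - lam * (Ta - Ts) + eps_a * sigmaB * (Rabs Ts ^ 3 * Ts)
  - 2 * eps_a * sigmaB * (Rabs Ta ^ 3 * Ta).

Definition rhs_s (sigmaB q lam eps_a Tm Tp bm bp Ta Ts : R) : R :=
  - lam * (Ts - Ta) - sigmaB * (Rabs Ts ^ 3 * Ts)
  + eps_a * sigmaB * (Rabs Ta ^ 3 * Ta) + q * coalbedo Tm Tp bm bp Ts.

Definition is_equilibrium (sigmaB q lam eps_a Tm Tp bm bp Ta Ts : R) : Prop :=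
  0 <= Ta /\ 0 <= Ts /\
  rhs_a sigmaB lam eps_a Ta Ts = 0 /\
  rhs_s sigmaB q lam eps_a Tm Tp bm bp Ta Ts = 0.

From Stdlib Require Import Reals List Lra Classical_Prop.
From mathcomp Require Import all_boot all_algebra.
From mathcomp Require Import Rstruct.
Import GRing.Theory.

(** For [T_a, T_s >= 0] the combination [rhs_a + 2 rhs_s] does not involve [T_a^4]
  and gives [T_a = T_s + ((2 - eps_a) sigma_B T_s^4 - 2 q beta_s(T_s)) / lambda], while
  [rhs_a + rhs_s = 0] reads [eps_a sigma_B T_a^4 = (eps_a - 1) sigma_B T_s^4 + q beta_s(T_s)].
  On each of the three intervals where [beta_s] is affine, substituting the first identity
  into the second makes [T_s] a root of a polynomial of degree 16 with leading coefficient
  [eps_a sigma_B ((2 - eps_a) sigma_B / lambda)^4 <> 0].  So only finitely many [T_s]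
  occur, and each determines [T_a]. *)

Section PolynomialRoots.
Variable R : idomainType.
Local Open Scope ring_scope.

Lemma roots_in_list (p : {poly R}) :
  p != 0 -> exists l : list R, forall x, root p x -> In x l.
Proof.
move: {2}(size p) (leqnn (size p)) => n; elim: n p => [|n IHn] p size_p p_neq0.
  by move: p_neq0; rewrite -size_poly_eq0 -leqn0 size_p.
have [[a /factor_theorem [r def_p]]|no_root] := classic (exists a, root p a); last first.
  by exists nil => x px; apply: no_root; exists x.
have r_neq0 : r != 0 by apply: contraNneq p_neq0 => r0; rewrite def_p r0 mul0r.
have size_r : (size r <= n)%N.
  by move: size_p; rewrite def_p size_mul ?polyXsubC_eq0 // size_XsubC addn2 /= ltnS.
have [l Hl] := IHn r size_r r_neq0.
exists (a :: l) => x; rewrite def_p rootM root_XsubC => /orP [/Hl|/eqP ->] /=; tauto.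
Qed.

Lemma scale_exp_sub_neq0 (c : R) (p r : {poly R}) n :
  c != 0 -> (size r < size (p ^+ n))%N -> c *: p ^+ n - r != 0.
Proof.
move=> c_neq0 size_r; rewrite -size_poly_eq0 size_polyDl ?size_polyN size_scale //.
by rewrite -lt0n; apply: leq_ltn_trans size_r.
Qed.

Definition quartic (A B C : R) : {poly R} := A *: 'X^4 + B *: 'X + C%:P.

Lemma horner_quartic A B C t : (quartic A B C).[t] = A * t ^+ 4 + B * t + C.
Proof. by rewrite /quartic !hornerE. Qed.

Lemma size_quartic_leq A B C : (size (quartic A B C) <= 5)%N.
Proof.
rewrite /quartic; apply: leq_trans (size_polyD _ _) _; rewrite geq_max.
apply/andP; split; last exact: leq_trans (size_polyC_leq1 _) _.
apply: leq_trans (size_polyD _ _) _; rewrite geq_max.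
apply/andP; split; apply: leq_trans (size_scale_leq _ _) _.
  by rewrite size_polyXn.
by rewrite size_polyX.
Qed.

Lemma size_quartic A B C : A != 0 -> size (quartic A B C) = 5%N.
Proof.
move=> A_neq0; rewrite /quartic -addrA size_polyDl size_scale ?size_polyXn //.
apply: leq_ltn_trans (size_polyD _ _) _; rewrite gtn_max.
apply/andP; split; last exact: leq_ltn_trans (size_polyC_leq1 _) _.
by apply: leq_ltn_trans (size_scale_leq _ _) _; rewrite size_polyX.
Qed.

Lemma quartic_pow4_roots_in_list (A B C D E F G : R) : A != 0 -> D != 0 ->
  exists l : list R, forall t,
    D * (A * t ^+ 4 + B * t + C) ^+ 4 = E * t ^+ 4 + F * t + G -> In t l.
Proof.
move=> A_neq0 D_neq0.
have Q_neq0 : quartic A B C != 0 by rewrite -size_poly_eq0 size_quartic.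
have P_neq0 : D *: quartic A B C ^+ 4 - quartic E F G != 0.
  apply: scale_exp_sub_neq0 => //.
  rewrite (polySpred (expf_neq0 _ Q_neq0)) size_exp (size_quartic A B C A_neq0).
  by apply: leq_ltn_trans (size_quartic_leq _ _ _) _.
have [l Hl] := roots_in_list _ P_neq0.
exists l => t Ht; apply: Hl.
by rewrite /root hornerD hornerN hornerZ horner_exp !horner_quartic Ht subrr.
Qed.

End PolynomialRoots.

Section Equilibria.
Local Open Scope R_scope.
Variables sigmaB q lam eps_a : R.
Hypotheses (hsB : 0 < sigmaB) (hlam : 0 < lam) (heps : 0 < eps_a < 2).

Definition balanced_Ta (beta Ts : R) : R :=
  Ts + ((2 - eps_a) * sigmaB * Ts ^ 4 - 2 * q * beta) / lam.

Lemma equilibrium_balance Tm Tp bm bp Ta Ts :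
  is_equilibrium sigmaB q lam eps_a Tm Tp bm bp Ta Ts ->
  Ta = balanced_Ta (coalbedo Tm Tp bm bp Ts) Ts /\
  eps_a * sigmaB * Ta ^ 4 = (eps_a - 1) * sigmaB * Ts ^ 4 + q * coalbedo Tm Tp bm bp Ts.
Proof.
rewrite /is_equilibrium /rhs_a /rhs_s /balanced_Ta.
move=> [Ta_ge0 [Ts_ge0]]; rewrite (Rabs_pos_eq Ta Ta_ge0) (Rabs_pos_eq Ts Ts_ge0).
move=> [eq_a eq_s]; split; last by lra.
by apply: (Rmult_eq_reg_l lam); [field_simplify; lra | lra].
Qed.

Lemma balance_affine_roots_in_list (a b : R) :
  exists l : list R, forall Ta Ts,
    Ta = balanced_Ta (a + b * Ts) Ts ->
    eps_a * sigmaB * Ta ^ 4 = (eps_a - 1) * sigmaB * Ts ^ 4 + q * (a + b * Ts) ->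
    In Ts l.
Proof.
have A_neq0 : (2 - eps_a) * sigmaB / lam <> 0.
  by apply: Rgt_not_eq; apply: Rdiv_lt_0_compat; [apply: Rmult_lt_0_compat|]; lra.
have D_neq0 : eps_a * sigmaB <> 0.
  by apply: Rgt_not_eq; apply: Rmult_lt_0_compat; lra.
have [l Hl] := quartic_pow4_roots_in_list _ ((2 - eps_a) * sigmaB / lam)
  (1 - 2 * q * b / lam) (- (2 * q * a / lam)) (eps_a * sigmaB)
  ((eps_a - 1) * sigmaB) (q * b) (q * a) (introN eqP A_neq0) (introN eqP D_neq0).
exists l => Ta Ts Ta_def balance; apply: Hl.
have Ta_quartic : Ta = (2 - eps_a) * sigmaB / lam * Ts ^ 4
                       + (1 - 2 * q * b / lam) * Ts + - (2 * q * a / lam).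
  by rewrite Ta_def /balanced_Ta; field; lra.
have : eps_a * sigmaB * Ta ^ 4 = (eps_a - 1) * sigmaB * Ts ^ 4 + q * b * Ts + q * a.
  by lra.
(* Once the powers are ring powers, [Rplus] and [Rmult] match the ring operations by conversion. *)
by rewrite Ta_quartic !RpowE.
Qed.

End Equilibria.

Lemma coalbedo_piecewise_affine (Tm Tp bm bp T : R) : Tm < Tp ->
  let k := (bp - bm) / (Tp - Tm) in
  coalbedo Tm Tp bm bp T = bm + 0 * T \/
  coalbedo Tm Tp bm bp T = bp + 0 * T \/
  coalbedo Tm Tp bm bp T = bm - k * Tm + k * T.
Proof.
move=> Tm_lt_Tp k; rewrite /coalbedo.
case: (Rle_dec T Tm) => _; first by left; ring.
case: (Rle_dec Tp T) => _; first by right; left; ring.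
by right; right; rewrite /k; field; lra.
Qed.

Theorem lemma6p2 (gamma_a gamma_s sigmaB q lam eps_a Tm Tp bm bp : R)
  (hga : 0 < gamma_a) (hgs : 0 < gamma_s) (hsB : 0 < sigmaB)
  (hq : 0 < q) (hlam : 0 < lam) (heps : 0 < eps_a < 2)
  (hT : 0 < Tm < Tp) (hb : 0 < bm < bp) :
  exists l : list (R * R),
    forall Ta Ts : R,
      is_equilibrium sigmaB q lam eps_a Tm Tp bm bp Ta Ts -> In (Ta, Ts) l.
Proof.
set k := (bp - bm) / (Tp - Tm).
have roots_on_piece := balance_affine_roots_in_list sigmaB q lam eps_a hsB hlam heps.
have [l1 H1] := roots_on_piece bm 0.
have [l2 H2] := roots_on_piece bp 0.
have [l3 H3] := roots_on_piece (bm - k * Tm) k.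
pose equilibrium_of Ts := (balanced_Ta sigmaB q lam eps_a (coalbedo Tm Tp bm bp Ts) Ts, Ts).
exists (List.map equilibrium_of (l1 ++ l2 ++ l3)%list) => Ta Ts.
move=> /(equilibrium_balance sigmaB q lam eps_a hlam) [Ta_def balance].
have -> : (Ta, Ts) = equilibrium_of Ts by rewrite Ta_def.
apply: in_map; rewrite !in_app_iff.
have [|[|]] := coalbedo_piecewise_affine Tm Tp bm bp Ts (proj2 hT);
  rewrite -/k => beta_Ts; rewrite beta_Ts in Ta_def balance.
- by left; exact: H1 Ta_def balance.
- by right; left; exact: H2 Ta_def balance.
- by right; right; exact: H3 Ta_def balance.
Qed.
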